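(* For every bipartition $(\mathbf L,\mathbf R)$ of a finite set $\mathbf A\subset\mathbb{N}^*$, there exists an elementary interval bipartition $(\mathbf L',\mathbf R')$ such that $\boldsymbol\lambda(\mathbf L,\mathbf R)=\boldsymbol\lambda(\mathbf L',\mathbf R')$.
   Context: A bipartition of $\mathbf A$ is an ordered pair $(\mathbf L,\mathbf R)$ with $\mathbf L\cup\mathbf R=\mathbf A$, $\mathbf L\cap\mathbf R=\varnothing$. An interval bipartition is a bipartition of an interval $\{i,i+1,\dots,j\}$ of $\mathbb{N}^*$ (or of $\varnothing$); it is elementary if either $\mathbf L=\mathbf R=\varnothing$, or $1\in\mathbf L$ and $\max(\mathbf L\cup\mathbf R)\in\mathbf R$. For a bipartition $(\mathbf L,\mathbf R)$ of a finite set with $\mathbf L=\{\ell_1<\dots<\ell_p\}$ nonempty, $\boldsymbol\lambda(\mathbf L,\mathbf R)$ is the integer partition with parts $\boldsymbol\lambda(\mathbf L,\mathbf R)_i=\#\{r\in\mathbf R:\ell_i<r\}$, $i=1,\dots,p$ (zero parts discarded); if $\mathbf L=\varnothing$, $\boldsymbol\lambda(\mathbf L,\mathbf R)=(0)$. *)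

From mathcomp Require Import all_boot all_order finmap.
Set Implicit Arguments. Unset Strict Implicit. Unset Printing Implicit Defensive.
Local Open Scope fset_scope.

Definition bipartition (A L R : {fset nat}) : Prop :=
  L `|` R = A /\ [disjoint L & R].

Definition is_interval (A : {fset nat}) : Prop :=
  A = fset0 \/ exists i j, 0 < i <= j /\ forall x, (x \in A) = (i <= x <= j).

Definition interval_bipartition (L R : {fset nat}) : Prop :=
  is_interval (L `|` R) /\ [disjoint L & R].

Definition elementary (L R : {fset nat}) : Prop :=
  (L = fset0 /\ R = fset0) \/ (1 \in L /\ (\max_(x <- L `|` R) x) \in R).

Definition lambda (L R : {fset nat}) : seq nat :=
  if L == fset0 then [:: 0]
  else [seq k <- [seq #|` [fset r in R | l < r]| | l <- sort leq L] | k != 0].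

(* equality of integer partitions (partitions are identified up to zero parts,
   so that the partition (0) is the empty partition) *)
Definition partition_eq (p q : seq nat) : Prop :=
  [seq k <- p | k != 0] = [seq k <- q | k != 0].

(* lambda(L, R) is weakly decreasing, since a larger element of L has fewer
   elements of R above it; so its nonzero parts form a partition
   mu_1 >= ... >= mu_k > 0.  Every such
   mu is realised by the bipartition of {1, ..., k + mu_1} tracing the boundary
   of the Young diagram of mu: the i-th element of L sits at position
   i + (mu_1 - mu_i), after i - 1 elements of L and mu_1 - mu_i of the mu_1
   elements of R, so exactly mu_i elements of R lie above it.  Position 1 is in
   L because mu_1 - mu_1 = 0, and the last position is in R. *)

From mathcomp Require Import all_boot all_order finmap zify.
Local Open Scope fset_scope.

Lemma count_gt_iota (a m n : nat) :
  count (fun x => a < x) (iota m n) = (m + n) - maxn m a.+1.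
Proof.
elim: n => [|n IHn]; first by rewrite /=; lia.
rewrite -[n.+1]addn1 iotaD count_cat IHn /= addn0.
by case: ltnP; lia.
Qed.

Lemma card_sep_fseq (s : seq nat) (P : pred nat) : uniq s ->
  #|` [fset x in [fset y in s] | P x]| = count P s.
Proof.
move=> s_uniq; have -> : [fset x in [fset y in s] | P x] = [fset x in filter P s].
  by apply/fsetP => x; rewrite !inE mem_filter andbC.
by rewrite card_fseq undup_id ?filter_uniq // size_filter.
Qed.

Lemma card_sep_bipartition (A L R : {fset nat}) (P : pred nat) :
  bipartition A L R ->
  #|` [fset x in A | P x]| = (#|` [fset x in L | P x]| + #|` [fset x in R | P x]|)%N.
Proof.
case=> <- disjLR.
have -> : [fset x in L `|` R | P x] = [fset x in L | P x] `|` [fset x in R | P x].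
  by apply/fsetP => x; rewrite !inE andb_orl.
rewrite cardfsU.
suff -> : [fset x in L | P x] `&` [fset x in R | P x] = fset0 by rewrite cardfs0 subn0.
apply/fsetP => x; rewrite !inE; apply/negbTE.
by case: (boolP (x \in L)) => //= /(fdisjointP disjLR) /negbTE ->; rewrite andbF.
Qed.

Lemma bipartition_fsetD (A L : {fset nat}) :
  L `<=` A -> bipartition A L (A `\` L).
Proof.
move=> LA; split; last by apply/fdisjointP => x xL; rewrite inE xL.
by apply/fsetP => x; rewrite !inE; case: (boolP (x \in L)) => //= /(fsubsetP LA).
Qed.

Lemma max_fset_iota1 (n : nat) : \max_(x <- [fset x in iota 1 n]) x = n.
Proof.
have mem_n (x : nat) : (x \in ([fset y in iota 1 n] : seq nat)) = (0 < x <= n).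
  by rewrite -[_ \in _]/(x \in [fset y in iota 1 n]) inE mem_iota; lia.
apply/eqP; rewrite eqn_leq; apply/andP; split.
  by apply/bigmax_leqP_seq => x; rewrite mem_n => /andP[_ ->].
by case: n mem_n => // n mem_n; apply: leq_bigmax_seq; rewrite ?mem_n ?leqnn.
Qed.

Lemma geq_trans : transitive geq.
Proof. by move=> m n p /= le_mn le_pm; apply: leq_trans le_pm le_mn. Qed.

Lemma lambda_sorted (L R : {fset nat}) : sorted geq (lambda L R).
Proof.
rewrite /lambda; case: ifP => // _.
apply: (sorted_filter geq_trans).
apply: homo_sorted (sort_sorted leq_total L) => l l' ll'.
apply: fsubset_leq_card; apply/fsubsetP => r; rewrite !inE => /andP[-> /=].
exact: leq_ltn_trans.
Qed.

Section Staircase.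

Variable s : seq nat.
Hypothesis s_sorted : sorted geq s.
Hypothesis s_gt0 : all (fun x => 0 < x) s.
Hypothesis s_neq0 : s != [::].

Definition stair_pos (i : nat) : nat := i.+1 + (head 0 s - nth 0 s i).
Definition stair_seq : seq nat := map stair_pos (iota 0 (size s)).
Definition stair_size : nat := size s + head 0 s.
Definition stair_interval : {fset nat} := [fset x in iota 1 stair_size].
Definition stair_left : {fset nat} := [fset x in stair_seq].
Definition stair_right : {fset nat} := stair_interval `\` stair_left.

Lemma nth_stair_anti : {homo nth 0 s : i j / i <= j >-> j <= i}.
Proof.
move=> i j le_ij; have [lt_js | le_sj] := ltnP j (size s); last by rewrite nth_default.
by apply: (sorted_leq_nth geq_trans leqnn 0 s_sorted); rewrite ?inE ?(leq_ltn_trans le_ij).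
Qed.

Lemma nth_stair_le_head (i : nat) : nth 0 s i <= head 0 s.
Proof. by rewrite -nth0; apply: nth_stair_anti. Qed.

Lemma stair_pos_mono : {mono stair_pos : i j / i < j}.
Proof.
move=> i j; rewrite /stair_pos.
have := nth_stair_le_head i; have := nth_stair_le_head j.
case: (ltnP i j) => [lt_ij | le_ji].
- by have /nth_stair_anti := ltnW lt_ij; lia.
- by have /nth_stair_anti := le_ji; lia.
Qed.

Lemma stair_pos_bounds (i : nat) : i < size s -> 0 < stair_pos i < stair_size.
Proof.
move=> lt_is; have s_i_gt0 : 0 < nth 0 s i := allP s_gt0 _ (mem_nth 0 lt_is).
by have := nth_stair_le_head i; rewrite /stair_pos /stair_size; lia.
Qed.

Lemma stair_seq_sorted : sorted ltn stair_seq.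
Proof. by apply: homo_sorted (iota_ltn_sorted 0 _) => i j; rewrite /= stair_pos_mono. Qed.

Lemma stair_seq_uniq : uniq stair_seq.
Proof. exact: (sorted_uniq ltn_trans ltnn stair_seq_sorted). Qed.

Lemma stair_size_gt0 : 0 < stair_size.
Proof. by rewrite addn_gt0 lt0n size_eq0 s_neq0. Qed.

Lemma stair_left_sub : stair_left `<=` stair_interval.
Proof.
apply/fsubsetP => x; rewrite !inE => /mapP[i]; rewrite mem_iota => /andP[_ lt_is] ->.
by rewrite mem_iota; have /stair_pos_bounds := lt_is; lia.
Qed.

Lemma stair_bipartition : bipartition stair_interval stair_left stair_right.
Proof. exact/bipartition_fsetD/stair_left_sub. Qed.

Lemma stair_interval_bipartition : interval_bipartition stair_left stair_right.
Proof.
have [LR_eq LR_disj] := stair_bipartition; split; rewrite ?LR_eq //; right.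
exists 1, stair_size; split=> [|x]; last by rewrite inE mem_iota; lia.
by rewrite stair_size_gt0.
Qed.

Lemma stair_elementary : elementary stair_left stair_right.
Proof.
rewrite /elementary; have [-> _] := stair_bipartition; right; split.
  rewrite inE; apply/mapP; exists 0; last by rewrite /stair_pos nth0 subnn.
  by rewrite mem_iota lt0n size_eq0.
rewrite max_fset_iota1 !inE mem_iota add1n ltnSn andbT.
rewrite stair_size_gt0 andbT; apply/mapP => -[i]; rewrite mem_iota => /andP[_ lt_is] eq_pos.
by have /stair_pos_bounds := lt_is; rewrite -eq_pos ltnn andbF.
Qed.

Lemma sort_stair_left : sort leq stair_left = stair_seq.
Proof.
have sorted_seq := sub_sorted ltnW stair_seq_sorted.
rewrite -(sorted_sort leq_trans sorted_seq); apply/perm_sortP => //.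
- exact: leq_total.
- exact: leq_trans.
- exact: anti_leq.
apply: uniq_perm; [exact: fset_uniq | exact: stair_seq_uniq |].
by move=> x; rewrite -[x \in (stair_left : seq nat)]/(x \in stair_left) inE.
Qed.

Lemma card_stair_right_gt (i : nat) : i < size s ->
  #|` [fset r in stair_right | stair_pos i < r]| = nth 0 s i.
Proof.
move=> lt_is.
have := card_sep_bipartition _ _ _ (fun x => stair_pos i < x) stair_bipartition.
move=> /esym/(canRL (addKn _)) ->.
rewrite card_sep_fseq ?iota_uniq // card_sep_fseq ?stair_seq_uniq //.
rewrite count_gt_iota count_map; under eq_count => j do rewrite /= stair_pos_mono.
rewrite count_gt_iota.
have /stair_pos_bounds := lt_is; have := nth_stair_le_head i.
by rewrite /stair_pos /stair_size; lia.
Qed.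

Lemma lambda_stair : lambda stair_left stair_right = s.
Proof.
rewrite /lambda sort_stair_left.
have -> : (stair_left == fset0) = false.
  apply/negbTE/negP => /eqP/fsetP/(_ (stair_pos 0)).
  by rewrite !inE map_f // mem_iota lt0n size_eq0.
have -> : [seq #|` [fset r in stair_right | l < r]| | l <- stair_seq] = s.
  rewrite -[RHS](mkseq_nth 0 s) /mkseq -map_comp; apply/eq_in_map => i.
  by rewrite mem_iota => /andP[_ /card_stair_right_gt].
by apply/all_filterP; apply: sub_all s_gt0 => x; rewrite lt0n.
Qed.

End Staircase.

Theorem lemma3p10 (A L R : {fset nat}) :
  0 \notin A -> bipartition A L R ->
  exists L' R' : {fset nat},
    interval_bipartition L' R' /\ elementary L' R' /\
    partition_eq (lambda L R) (lambda L' R').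
Proof.
move=> _ _; rewrite /partition_eq.
set mu := [seq k <- lambda L R | k != 0].
have mu_sorted : sorted geq mu := sorted_filter geq_trans _ (lambda_sorted L R).
have mu_gt0 : all (fun k => 0 < k) mu by apply/allP => k; rewrite mem_filter lt0n => /andP[].
have [mu_nil | mu_neq0] := eqVneq mu [::].
  exists fset0, fset0; split; [split | split].
  - by left; rewrite fsetU0.
  - exact: fdisjoint0X.
  - by left.
  by rewrite mu_nil /lambda eqxx.
exists (stair_left mu), (stair_right mu).
split; first exact: stair_interval_bipartition.
split; first exact: stair_elementary.
by rewrite lambda_stair // filter_id.
Qed.
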